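(* For all $x,u\in\mathbb R$, \[\int_0^1|\dot K_t(x,u)|\,dt\le 10\sup_{0<t\le1}K_t(x,u).\]
   Context: $R(x)=x^2/2$. $K_t(x,u)=\frac{e^{R(x)}}{\sqrt{1-e^{-2t}}}\exp\bigl(-\frac12\frac{(e^{-t}u-x)^2}{1-e^{-2t}}\bigr)$ for $t>0$, and $\dot K_t=\partial K_t/\partial t$. *)

From HB Require Import structures.
From mathcomp Require Import all_boot all_order all_algebra.
From mathcomp Require Import all_classical all_reals all_analysis.
Set Implicit Arguments. Unset Strict Implicit. Unset Printing Implicit Defensive.
Import Order.TTheory GRing.Theory Num.Theory.
Local Open Scope ring_scope.

Definition Rpot {R : realType} (x : R) : R := x ^+ 2 / 2.

Definition Kt {R : realType} (t x u : R) : R :=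
  expR (Rpot x) / Num.sqrt (1 - expR (- (2 * t)))
  * expR (- (1 / 2) * ((expR (- t) * u - x) ^+ 2 / (1 - expR (- (2 * t))))).

Definition Ktdot {R : realType} (t x u : R) : R :=
  derive1 (fun s : R => Kt s x u) t.

From HB Require Import structures.
From mathcomp Require Import all_boot all_order all_algebra.
From mathcomp Require Import all_classical all_reals all_analysis.
From mathcomp Require Import measurable_realfun ring lra.
Set Implicit Arguments. Unset Strict Implicit. Unset Printing Implicit Defensive.
Import Order.TTheory GRing.Theory Num.Theory.
Import numFieldNormedType.Exports.
Local Open Scope classical_set_scope.
Local Open Scope ring_scope.

(* For x, u fixed, t |-> K_t(x, u) is smooth on ]0, oo[ and its t-derivative
   is K_t times an explicit rational function of y = e^{-t}; after clearing
   denominators its zeros are roots of a cubic in y, so K_t changes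
   monotonicity at most three times.  A function F >= 0 bounded by M whose
   derivative f has at most n zeros on [a, b] satisfies
   \int_[a, b] |f| <= 2^n M (split at a zero and induct; on a zero-free piece
   f has constant sign and the integral is |F b - F a| by the FTC).  Applied
   on [e, 1] with M = sup_{]0,1]} K_t and n = 3 this gives the bound 8 M,
   which passes to ]0, 1] by monotone convergence as e -> 0+. *)

Section TotalVariation.
Variable R : realType.
Local Notation mu := (@lebesgue_measure R).

Lemma is_derive_continuous (F : R -> R) (t d : R) :
  is_derive t 1 F d -> {for t, continuous F}.
Proof.
by move=> [dF _]; apply: differentiable_continuous; apply/derivable1_diffP.
Qed.

Lemma continuous_within_itv (f : R -> R) (a b : R) :
  (forall t, a <= t <= b -> {for t, continuous f}) ->
  {within `[a, b], continuous f}.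
Proof.
by move=> fc; apply: continuous_in_subspaceT => t; rewrite inE /= in_itv; apply: fc.
Qed.

Lemma sign_change_root (f : R -> R) (a b t1 t2 : R) :
  (forall t, a <= t <= b -> {for t, continuous f}) ->
  a < t1 < b -> a < t2 < b -> f t1 < 0 -> 0 < f t2 ->
  exists2 c, a < c < b & f c = 0.
Proof.
move=> fc ht1 ht2 f1 f2.
have root_between lo hi : a < lo < b -> a < hi < b -> lo <= hi ->
    Num.min (f lo) (f hi) <= 0 <= Num.max (f lo) (f hi) ->
    exists2 c, a < c < b & f c = 0.
  move=> /andP[alo lob] /andP[ahi hib] lohi fv.
  have fcont : {within `[lo, hi], continuous f}.
    apply: continuous_within_itv => t /andP[lot thi]; apply: fc.
    by rewrite (le_trans (ltW alo) lot) (le_trans thi (ltW hib)).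
  have [c] := IVT lohi fcont fv; rewrite in_itv /= => /andP[loc chi] fc0.
  by exists c; rewrite ?(lt_le_trans alo loc) ?(le_lt_trans chi hib).
have fv lo hi : Num.min (f lo) (f hi) <= 0 <= Num.max (f lo) (f hi) ->
    Num.min (f hi) (f lo) <= 0 <= Num.max (f hi) (f lo) by rewrite minC maxC.
have sgn : Num.min (f t1) (f t2) <= 0 <= Num.max (f t1) (f t2).
  by rewrite ge_min le_max (ltW f1) (ltW f2) orbT.
have [t12|t21] := leP t1 t2; first exact: root_between sgn.
exact: root_between (ltW t21) (fv _ _ sgn).
Qed.

Lemma no_root_sign (f : R -> R) (a b : R) :
  (forall t, a <= t <= b -> {for t, continuous f}) ->
  (forall t, a < t < b -> f t != 0) ->
  (forall t, a < t < b -> 0 < f t) \/ (forall t, a < t < b -> f t < 0).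
Proof.
move=> fc fn0.
have [[t1 ht1 f1]|hneg] := pselect (exists2 t, a < t < b & f t < 0).
  right => t ht; rewrite lt_neqAle fn0 //= leNgt; apply/negP => f2.
  have [c hc fc0] := sign_change_root fc ht1 ht f1 f2.
  by move: (fn0 c hc); rewrite fc0 eqxx.
left => t ht; rewrite lt_neqAle eq_sym fn0 //= leNgt; apply/negP => f2.
by apply: hneg; exists t.
Qed.

Lemma integral_abs_pos_derive (f F : R -> R) (a b : R) : a < b ->
  (forall t, a <= t <= b -> is_derive t 1 F (f t)) ->
  (forall t, a <= t <= b -> {for t, continuous f}) ->
  (forall t, a < t < b -> 0 < f t) ->
  (\int[mu]_(t in `[a, b]) (`|f t|)%:E = (F b - F a)%:E)%E.
Proof.
move=> ab Fd fc fpos.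
have aab : a <= a <= b by rewrite lexx ltW.
have bab : a <= b <= b by rewrite lexx ltW.
have abs_cont : {within `[a, b], continuous (fun t => `|f t|)}.
  apply: continuous_within_itv => t ht.
  exact: continuous_comp (fc t ht) (@norm_continuous _ R^o _).
have F_reg : derivable_oo_LRcontinuous F a b.
  split.
  - move=> t; rewrite in_itv /= => /andP[ta tb].
    by apply: (@ex_derive _ _ _ _ _ _ (f t)); apply: Fd; rewrite !ltW.
  - exact/cvg_at_right_filter/(is_derive_continuous (Fd a aab)).
  - exact/cvg_at_left_filter/(is_derive_continuous (Fd b bab)).
apply: continuous_FTC2 ab abs_cont F_reg _ => t; rewrite in_itv /= => ht.
rewrite derive1E (@derive_val _ _ _ _ _ _ _ (Fd t _)) ?gtr0_norm ?fpos //.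
by case/andP: ht => ta tb; rewrite !ltW.
Qed.

Lemma integral_abs_derive_no_root (f F : R -> R) (a b M : R) : a < b ->
  (forall t, a <= t <= b -> is_derive t 1 F (f t)) ->
  (forall t, a <= t <= b -> {for t, continuous f}) ->
  (forall t, a <= t <= b -> 0 <= F t <= M) ->
  (forall t, a < t < b -> f t != 0) ->
  (\int[mu]_(t in `[a, b]) (`|f t|)%:E <= M%:E)%E.
Proof.
move=> ab Fd fc FM fn0.
have /andP[Fa0 FaM] : 0 <= F a <= M by apply: FM; rewrite lexx ltW.
have /andP[Fb0 FbM] : 0 <= F b <= M by apply: FM; rewrite lexx ltW.
have [fpos|fneg] := no_root_sign fc fn0.
  by rewrite (integral_abs_pos_derive ab Fd fc fpos) lee_fin; lra.
have NFd t : a <= t <= b -> is_derive t 1 (fun s => - F s) (- f t).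
  by move=> ht; apply: is_deriveN; apply: Fd.
have Nfc t : a <= t <= b -> {for t, continuous (fun s => - f s)}.
  by move=> ht; apply: cvgN; apply: fc.
have Nfpos t : a < t < b -> 0 < - f t by move=> ht; rewrite oppr_gt0 fneg.
have -> : (\int[mu]_(t in `[a, b]) (`|f t|)%:E =
           \int[mu]_(t in `[a, b]) (`|- f t|)%:E)%E.
  by apply: eq_integral => t _; rewrite normrN.
by rewrite (integral_abs_pos_derive ab NFd Nfc Nfpos) lee_fin; lra.
Qed.

Lemma itv_restrict (P : R -> Prop) (a b a' b' : R) : a <= a' -> b' <= b ->
  (forall t, a <= t <= b -> P t) -> forall t, a' <= t <= b' -> P t.
Proof.
move=> aa' b'b hP t /andP[a't tb']; apply: hP.
by rewrite (le_trans aa' a't) (le_trans tb' b'b).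
Qed.

Lemma measurable_fun_abs_continuous (D : set R) (f : R -> R) : measurable D ->
  (forall t, D t -> {for t, continuous f}) -> measurable_fun D (fun t => `|f t|).
Proof.
move=> mD fc; apply: subspace_continuous_measurable_fun => //.
apply: continuous_in_subspaceT => t /[!inE] Dt.
exact: continuous_comp (fc t Dt) (@norm_continuous _ R^o _).
Qed.

Lemma integral_itv_split (g : R -> R) (a c b : R) : a <= c -> c <= b ->
  (forall t, 0 <= g t) -> measurable_fun `[a, b] g ->
  (\int[mu]_(t in `[a, b]) (g t)%:E =
   \int[mu]_(t in `[a, c]) (g t)%:E + \int[mu]_(t in `[c, b]) (g t)%:E)%E.
Proof.
move=> ac cb g0 mg.
have mg' : measurable_fun `[a, b] (EFin \o g) by apply/measurable_EFinP.
have abU : `[a, b]%classic = `[a, c] `|` `]c, b].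
  by apply: itv_bndbnd_setU; rewrite bnd_simp.
rewrite abU ge0_integral_setU //=; first last.
- rewrite disj_set2E; apply/eqP/seteqP; split => // t /=.
  rewrite !in_itv /= => -[/andP[_ tc] /andP[ct _]].
  by move: (lt_le_trans ct tc); rewrite ltxx.
- by move=> t _; rewrite lee_fin.
- by rewrite -abU.
rewrite integral_itv_obnd_cbnd //; apply: measurable_funS mg' => //.
by rewrite abU; apply: subsetUr.
Qed.

Definition at_most_zeros (n : nat) (f : R -> R) (a b : R) : Prop :=
  forall s : seq R, uniq s -> all (fun t => (a < t < b) && (f t == 0)) s ->
  (size s <= n)%N.

Lemma at_most_zeros0 (f : R -> R) (a b : R) :
  at_most_zeros 0 f a b -> forall t, a < t < b -> f t != 0.
Proof.
move=> Z t ht; apply/negP => /eqP ft0.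
by have := Z [:: t] erefl; rewrite /= ht ft0 eqxx => /(_ erefl).
Qed.

(* A zero c of f in ]a, b[ lying outside ]a', b'[ (a subinterval of ]a, b[)
   is one zero fewer to spend on ]a', b'[. *)
Lemma at_most_zeros_split (n : nat) (f : R -> R) (a b c a' b' : R) :
  at_most_zeros n.+1 f a b -> a < c < b -> f c = 0 ->
  a <= a' -> b' <= b -> ~~ (a' < c < b') -> at_most_zeros n f a' b'.
Proof.
move=> Z hc fc0 aa' b'b c_out s us als.
have /= : (size (c :: s) <= n.+1)%N; last by [].
apply: Z => /=.
  rewrite us andbT; apply/negP => cs.
  by move: (allP als c cs) => /andP[c_in _]; rewrite c_in in c_out.
rewrite hc fc0 eqxx /=; apply/allP => t ts.
move: (allP als t ts) => /andP[/andP[a't tb'] ->].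
by rewrite (le_lt_trans aa' a't) (lt_le_trans tb' b'b).
Qed.

Lemma integral_abs_derive_le (n : nat) (f F : R -> R) (a b M : R) : a < b ->
  (forall t, a <= t <= b -> is_derive t 1 F (f t)) ->
  (forall t, a <= t <= b -> {for t, continuous f}) ->
  (forall t, a <= t <= b -> 0 <= F t <= M) ->
  at_most_zeros n f a b ->
  (\int[mu]_(t in `[a, b]) (`|f t|)%:E <= (2 ^+ n * M)%:E)%E.
Proof.
elim: n a b => [|n IH] a b ab Fd fc FM Z.
  by rewrite expr0 mul1r; exact: integral_abs_derive_no_root (at_most_zeros0 Z).
have [[c /andP[ac cb] fc0]|no_root] := pselect (exists2 c, a < c < b & f c = 0).
  have hc : a < c < b by rewrite ac cb.
  rewrite (@integral_itv_split (fun t => `|f t|) a c b (ltW ac) (ltW cb)) //;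
    last by apply: measurable_fun_abs_continuous => // t; rewrite /= in_itv; apply: fc.
  rewrite exprS -mulrA mulr_natl mulr2n EFinD.
  apply: leeD; apply: IH.
  - exact: ac.
  - exact: itv_restrict (lexx a) (ltW cb) Fd.
  - exact: itv_restrict (lexx a) (ltW cb) fc.
  - exact: itv_restrict (lexx a) (ltW cb) FM.
  - by apply: at_most_zeros_split Z hc fc0 _ _ _; rewrite ?lexx ?ltW // ltxx andbF.
  - exact: cb.
  - exact: itv_restrict (ltW ac) (lexx b) Fd.
  - exact: itv_restrict (ltW ac) (lexx b) fc.
  - exact: itv_restrict (ltW ac) (lexx b) FM.
  - by apply: at_most_zeros_split Z hc fc0 _ _ _; rewrite ?lexx ?ltW // ltxx.
have /andP[Fa0 FaM] : 0 <= F a <= M by apply: FM; rewrite lexx ltW.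
apply: le_trans (integral_abs_derive_no_root ab Fd fc FM _) _.
  by move=> t ht; apply/negP => /eqP ft0; apply: no_root; exists t.
by rewrite lee_fin ler_peMl ?(le_trans Fa0 FaM) // exprn_ege1 // ler1n.
Qed.

Lemma integral_itv_ocbnd_le (g : R -> R) (a b C : R) : a < b ->
  (forall t, 0 <= g t) -> measurable_fun `]a, b] g ->
  (forall e, a < e < b -> (\int[mu]_(t in `[e, b]) (g t)%:E <= C%:E)%E) ->
  (\int[mu]_(t in `]a, b]) (g t)%:E <= C%:E)%E.
Proof.
move=> ab g0 mg bound.
set D : set R := `]a, b]%classic.
have mD : measurable D by exact: measurable_itv.
pose e (n : nat) : R := a + (b - a) * n.+2%:R^-1.
have e_in n : a < e n < b.
  have k0 : 0 < n.+2%:R^-1 :> R by rewrite invr_gt0 ltr0n.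
  have k1 : n.+2%:R^-1 < 1 :> R by rewrite invf_lt1 ?ltr0n // ltr1n.
  by rewrite /e ltrDl mulr_gt0 ?subr_gt0 //= -ltrBrDl gtr_pMr ?subr_gt0.
have e_nincr m n : (m <= n)%N -> e n <= e m.
  move=> mn; rewrite /e lerD2l ler_wpM2l ?subr_ge0 ?(ltW ab) //.
  by rewrite lef_pV2 ?posrE ?ltr0n // ler_nat ltnS.
pose G (n : nat) := (EFin \o g) \_ `[e n, b].
have eD n : `[e n, b] `<=` D.
  move=> t; rewrite /D /= !in_itv /= => /andP[ent ->]; rewrite andbT.
  by have /andP[aen _] := e_in n; exact: lt_le_trans aen ent.
have mG n : measurable_fun D (G n).
  apply/(measurable_restrict _ (measurable_itv _) mD).
  by apply: (measurable_funS mD); [exact: subIsetl | exact/measurable_EFinP].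
have G0 n t : D t -> (0 <= G n t)%E.
  by move=> _; rewrite /G /patch; case: ifP => _ //; rewrite lee_fin.
have G_nd t : D t -> nondecreasing_seq (G ^~ t).
  move=> _ m n mn; rewrite /G /patch.
  case: ifPn => [|_]; last by case: ifP => _ //; rewrite lee_fin.
  rewrite !inE /= !in_itv /= => /andP[emt tb].
  by rewrite ifT // inE /= in_itv /= (le_trans (e_nincr _ _ mn) emt) tb.
have G_lim t : D t -> G ^~ t @ \oo --> (g t)%:E.
  rewrite /D /= in_itv /= => /andP[ta tb].
  apply: cvg_near_cst.
  have eps0 : 0 < (t - a) / (b - a) by rewrite divr_gt0 ?subr_gt0.
  near=> n.
  have : n.+1%:R^-1 < (t - a) / (b - a).
    by near: n; exact: near_infty_natSinv_lt (PosNum eps0).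
  rewrite ltr_pdivlMr ?subr_gt0 // => hn.
  have k21 : n.+2%:R^-1 <= n.+1%:R^-1 :> R by rewrite lef_pV2 ?posrE ?ltr0n // ler_nat.
  have ent : e n <= t.
    rewrite /e -lerBrDl; apply: le_trans (ltW hn).
    by rewrite [_ * (b - a)]mulrC ler_wpM2l ?subr_ge0 ?(ltW ab).
  by rewrite /G /patch ifT // inE /= in_itv /= ent tb.
have -> : (\int[mu]_(t in D) (g t)%:E = \int[mu]_(t in D) limn (G ^~ t))%E.
  by apply: eq_integral => t /[!inE] Dt; apply/esym/cvg_lim => //; exact: G_lim.
rewrite (monotone_convergence mu mD mG G0 G_nd).
apply: lime_le; first exact: cvgP (@cvg_monotone_convergence _ _ R mu D mD G mG G0 G_nd).
apply: nearW => n.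
rewrite /G -integral_mkcondr setIidr; last exact: eD.
exact: bound.
Unshelve. all: by end_near.
Qed.

End TotalVariation.

Section Kernel.
Variable R : realType.
Variables x u : R.

Definition kvar (t : R) : R := 1 - expR (- (2 * t)).
Definition kgap (t : R) : R := expR (- t) * u - x.

Definition Kt_logderiv (t : R) : R :=
  - expR (- (2 * t)) / kvar t + expR (- t) * u * kgap t / kvar t
  + kgap t ^+ 2 * expR (- (2 * t)) / kvar t ^+ 2.
Definition Kt_deriv (t : R) : R := Kt t x u * Kt_logderiv t.

Lemma kvar_gt0 (t : R) : 0 < t -> 0 < kvar t.
Proof. by move=> t0; rewrite /kvar subr_gt0 expR_lt1 oppr_lt0 mulr_gt0. Qed.

Lemma Kt_ge0 (t : R) : 0 <= Kt t x u.
Proof. by rewrite /Kt mulr_ge0 ?divr_ge0 ?expR_ge0 ?sqrtr_ge0. Qed.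

Lemma Kt_gt0 (t : R) : 0 < t -> 0 < Kt t x u.
Proof.
move=> /kvar_gt0; rewrite /kvar => v0.
by rewrite /Kt mulr_gt0 ?divr_gt0 ?expR_gt0 ?sqrtr_gt0.
Qed.

Lemma Kt_is_derive (t : R) : 0 < t -> is_derive t 1 (fun s => Kt s x u) (Kt_deriv t).
Proof.
move=> t0; have v0 := kvar_gt0 t0.
have hv : is_derive t 1 (fun s : R => 1 - expR (- (2 * s))) (2 * expR (- (2 * t))).
  by apply: is_derive_eq; rewrite -[2%:A]/(2 * 1); ring.
(* Derivatives of the square root and nonvanishing denominators, used by the
   instance search of is_derive_eq. *)
have hsq : is_derive t 1 (fun s : R => Num.sqrt (1 - expR (- (2 * s))))
    ((2 * Num.sqrt (kvar t))^-1 * (2 * expR (- (2 * t)))).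
  exact: is_derive1_comp (is_derive1_sqrt v0) hv.
have sq0 : Num.sqrt (1 - expR (- (2 * t))) != 0 by rewrite gt_eqF // sqrtr_gt0.
have vn0 : 1 - expR (- (2 * t)) != 0 by rewrite gt_eqF.
rewrite /Kt /Rpot; apply: is_derive_eq.
rewrite /Kt_deriv /Kt /Kt_logderiv /kgap /kvar /Rpot -![_ *: _]/(_ * _).
set q := Num.sqrt _.
have q0 : q != 0 by [].
have -> : expR (- (2 * t)) = 1 - q ^+ 2 by rewrite /q sqr_sqrtr ?subKr // ltW.
field; rewrite (_ : 1 - (1 - q ^+ 2) = q ^+ 2); last by ring.
by rewrite expf_neq0.
Qed.

Lemma Kt_deriv_continuous (t : R) : 0 < t -> {for t, continuous Kt_deriv}.
Proof.
move=> t0; have v0 := kvar_gt0 t0.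
have hv : is_derive t 1 (fun s : R => 1 - expR (- (2 * s))) (2 * expR (- (2 * t))).
  by apply: is_derive_eq; rewrite -[2%:A]/(2 * 1); ring.
(* Derivatives and nonvanishing denominators used by the instance search. *)
have vn0 : 1 - expR (- (2 * t)) != 0 by rewrite gt_eqF.
have vn2 : (1 - expR (- (2 * t))) ^+ 2 != 0 by rewrite expf_neq0.
have hK := Kt_is_derive t0.
have [d hd] : exists d, is_derive t 1 Kt_deriv d.
  by rewrite /Kt_deriv /Kt_logderiv /kgap /kvar; eexists; exact: _.
exact: is_derive_continuous hd.
Qed.

(* The zeros of Kt_deriv in t > 0 are, through y = e^{-t}, roots of this cubic. *)
Definition Kt_deriv_poly : {poly R} :=
  Poly [:: - (u * x); u ^+ 2 + x ^+ 2 - 1; - (u * x); 1].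

Lemma Kt_deriv_poly_horner (y : R) : Kt_deriv_poly.[y] =
  y ^+ 3 - u * x * y ^+ 2 + (u ^+ 2 + x ^+ 2 - 1) * y - u * x.
Proof. by rewrite /Kt_deriv_poly horner_Poly /=; ring. Qed.

Lemma size_Kt_deriv_poly : size Kt_deriv_poly = 4.
Proof. by rewrite /Kt_deriv_poly (@PolyK _ 0) //= oner_neq0. Qed.

(* Kt_deriv = Kt * Kt_logderiv with Kt > 0, and clearing the denominators of
   Kt_logderiv leaves y * Kt_deriv_poly.[y] with y = e^{-t} > 0. *)
Lemma Kt_deriv_root (t : R) : 0 < t -> Kt_deriv t = 0 -> root Kt_deriv_poly (expR (- t)).
Proof.
move=> t0; rewrite /Kt_deriv => /eqP; rewrite mulf_eq0 gt_eqF ?Kt_gt0 //= => /eqP.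
have v0 := kvar_gt0 t0.
have e2 : expR (- (2 * t)) = expR (- t) ^+ 2 by rewrite -mulrN expRM_natl.
have y0 : expR (- t) != 0 by rewrite gt_eqF ?expR_gt0.
rewrite /root Kt_deriv_poly_horner.
move: v0; rewrite /Kt_logderiv /kgap /kvar e2 => v0 hB.
have vn0 : 1 - expR (- t) ^+ 2 != 0 by rewrite gt_eqF.
have : expR (- t) * (expR (- t) ^+ 3 - u * x * expR (- t) ^+ 2
         + (u ^+ 2 + x ^+ 2 - 1) * expR (- t) - u * x) = 0.
  by rewrite -[RHS](mul0r ((1 - expR (- t) ^+ 2) ^+ 2)) -hB; field.
by move/eqP; rewrite mulf_eq0 (negbTE y0).
Qed.

Lemma Kt_deriv_at_most_zeros (a b : R) : 0 <= a -> at_most_zeros 3 Kt_deriv a b.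
Proof.
move=> a0 s us als.
have exp_inj : injective (fun t : R => expR (- t)) by move=> t1 t2 /expR_inj /oppr_inj.
have P0 : Kt_deriv_poly != 0 by rewrite -size_poly_eq0 size_Kt_deriv_poly.
have := max_poly_roots P0 (rs := map (fun t => expR (- t)) s).
rewrite (map_inj_uniq exp_inj) us size_map size_Kt_deriv_poly; apply => //.
apply/allP => y /mapP [t ts ->].
move: (allP als t ts) => /andP[/andP[ta _] /eqP Kt0].
by apply: Kt_deriv_root Kt0; exact: le_lt_trans ta.
Qed.

End Kernel.

Lemma Ktdot_Kt_deriv (R : realType) (x u t : R) : 0 < t -> Ktdot t x u = Kt_deriv x u t.
Proof.
by move=> t0; rewrite /Ktdot derive1E (@derive_val _ _ _ _ _ _ _ (Kt_is_derive x u t0)).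
Qed.

Lemma integral_Ktdot_le (R : realType) (x u r : R) :
  (forall t, 0 < t <= 1 -> Kt t x u <= r) ->
  (\int[@lebesgue_measure R]_(t in `]0%R, 1%R]) `|(Ktdot t x u)%:E| <= (8 * r)%:E)%E.
Proof.
move=> Kr.
have -> : (\int[@lebesgue_measure R]_(t in `]0%R, 1%R]) `|(Ktdot t x u)%:E| =
           \int[@lebesgue_measure R]_(t in `]0%R, 1%R]) (`|Kt_deriv x u t|)%:E)%E.
  by apply: eq_integral => t /[!inE] /andP[t0 _]; rewrite Ktdot_Kt_deriv.
apply: integral_itv_ocbnd_le ltr01 (fun t => normr_ge0 _) _ _.
  apply: measurable_fun_abs_continuous => [|t /=]; first exact: measurable_itv.
  by rewrite in_itv /= => /andP[t0 _]; exact: Kt_deriv_continuous.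
move=> e /andP[e0 e1].
have pos t : e <= t <= 1 -> 0 < t by case/andP => et _; exact: lt_le_trans et.
have -> : 8 * r = 2 ^+ 3 * r by rewrite -natrX.
apply: (integral_abs_derive_le (F := fun s => Kt s x u)) e1 _ _ _ _.
- by move=> t /pos; exact: Kt_is_derive.
- by move=> t /pos; exact: Kt_deriv_continuous.
- by move=> t ht; rewrite Kt_ge0 Kr // pos //= (andP ht).2.
- exact: Kt_deriv_at_most_zeros (ltW e0).
Qed.

Local Open Scope ereal_scope.

Theorem mainTheorem7 (R : realType) (x u : R) :
  \int[@lebesgue_measure R]_(t in `]0%R, 1%R]) `|(Ktdot t x u)%:E|
  <= 10%:E * ereal_sup [set (Kt t x u)%:E | t in `]0%R, 1%R]].
Proof.
set S := [set (Kt t x u)%:E | t in `]0%R, 1%R]].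
have ub t : (0 < t <= 1)%R -> (Kt t x u)%:E <= ereal_sup S.
  by move=> ht; apply: ereal_sup_ubound; exists t.
have h1 : (0 < (1 : R) <= 1)%R by rewrite ltr01 lexx.
case HS : (ereal_sup S) => [r| |]; last 2 first.
- by rewrite gt0_muley ?lte_fin // leey.
- by have := ub 1%R h1; rewrite HS leeNy_eq.
have Kr t : (0 < t <= 1)%R -> (Kt t x u <= r)%R.
  by move=> ht; have := ub t ht; rewrite HS lee_fin.
have r0 : (0 <= r)%R by apply: le_trans (Kr 1%R h1); exact: Kt_ge0.
apply: le_trans (integral_Ktdot_le Kr) _.
by rewrite -EFinM lee_fin ler_wpM2r // ler_nat.
Qed.
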